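(* Let $A\in\mathbb{R}^{n\times d}$, $k\ge1$, and suppose $\lambda:=\|A-A_k\|_F^2/k>0$. Let $C_1\in\mathbb{R}^{n\times d'}$ and $c_1>0$ satisfy $AA^T+\lambda I_n\preceq c_1\,(C_1C_1^T+\lambda I_n)$, and let $Z$ be a matrix with orthonormal columns spanning the column space of $C_1$. Then for every $i=1,\dots,d$, $$\|a_i-ZZ^Ta_i\|_2^2\le c_1\,\lambda\,\bar\tau_i(A).$$
   Context: $A$ has columns $a_1,\dots,a_d$. $A_k$ denotes a best rank-$k$ approximation of $A$ in Frobenius norm. $\preceq$ is the Loewner order and $M^+$ the Moore–Penrose pseudoinverse. The ridge leverage score is $\bar\tau_i(A)=a_i^T\big(AA^T+\frac{\|A-A_k\|_F^2}{k}I_n\big)^+a_i$. *)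

From HB Require Import structures.
From mathcomp Require Import all_boot all_order all_algebra.
Set Implicit Arguments. Unset Strict Implicit. Unset Printing Implicit Defensive.
Import Order.TTheory GRing.Theory Num.Theory.
Local Open Scope ring_scope.

(* Squared Frobenius norm: sum of squares of entries. For a column vector
   this is the squared Euclidean norm. *)
Definition frob2 (R : realFieldType) (m n : nat) (M : 'M[R]_(m, n)) : R :=
  \sum_(i < m) \sum_(j < n) M i j ^+ 2.

Definition best_rank_approx (R : realFieldType) (m n k : nat)
    (A Ak : 'M[R]_(m, n)) : Prop :=
  (\rank Ak <= k)%N /\
  forall B : 'M[R]_(m, n), (\rank B <= k)%N -> frob2 (A - Ak) <= frob2 (A - B).

Definition loewner_le (R : realFieldType) (n : nat) (M N : 'M[R]_n) : Prop :=
  forall x : 'cV[R]_n, 0 <= (x^T *m (N - M) *m x) 0 0.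

Definition is_pinv (R : realFieldType) (m n : nat)
    (M : 'M[R]_(m, n)) (X : 'M[R]_(n, m)) : Prop :=
  [/\ M *m X *m M = M, X *m M *m X = X,
      (M *m X)^T = M *m X & (X *m M)^T = X *m M].

(* Ridge leverage score tau_i(A) = a_i^T (A A^T + lambda I)^+ a_i,
   with P the pseudoinverse of A A^T + lambda I. *)
Definition ridge_score (R : realFieldType) (n d : nat)
    (A : 'M[R]_(n, d)) (P : 'M[R]_n) (i : 'I_d) : R :=
  ((col i A)^T *m P *m col i A) 0 0.

(* With M := A A^T + lambda I, which is positive definite so that P = M^-1,
   put x := a_i - Z Z^T a_i. Since x is orthogonal to the column space of C1,
   the Loewner hypothesis gives x^T M x <= t |x|^2 = t x^T a_i with
   t := c1 lambda. Expanding 0 <= u^T M u at u := x - t M^-1 a_i yields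
   2 t x^T a_i - x^T M x <= t^2 a_i^T M^-1 a_i, and the two inequalities
   combine to |x|^2 <= t a_i^T M^-1 a_i. *)
From HB Require Import structures.
From mathcomp Require Import all_boot all_order all_algebra.
From mathcomp Require Import lra.
Set Implicit Arguments. Unset Strict Implicit. Unset Printing Implicit Defensive.
Import Order.TTheory GRing.Theory Num.Theory.
Local Open Scope ring_scope.

Section QuadraticForms.
Variable R : realFieldType.

Definition qform n (M : 'M[R]_n) (x : 'cV[R]_n) : R := (x^T *m M *m x) 0 0.

Lemma frob2_ge0 m p (M : 'M[R]_(m, p)) : 0 <= frob2 M.
Proof. by apply: sumr_ge0 => i _; apply: sumr_ge0 => j _; apply: sqr_ge0. Qed.

Lemma frob2_0 m p : frob2 (0 : 'M[R]_(m, p)) = 0.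
Proof.
by rewrite /frob2 big1 // => i _; rewrite big1 // => j _; rewrite mxE expr0n.
Qed.

Lemma frob2_eq0 m p (M : 'M[R]_(m, p)) : (frob2 M == 0) = (M == 0).
Proof.
apply/eqP/eqP => [M0|->]; last exact: frob2_0.
have rows0 i : \sum_j M i j ^+ 2 = 0.
  by apply: (psumr_eq0P _ M0) => // i' _; apply: sumr_ge0 => j _; apply: sqr_ge0.
apply/matrixP => i j; rewrite mxE; apply/eqP; rewrite -sqrf_eq0; apply/eqP.
by apply: (psumr_eq0P _ (rows0 i)) => // j' _; apply: sqr_ge0.
Qed.

Lemma frob2_cV n (v : 'cV[R]_n) : frob2 v = (v^T *m v) 0 0.
Proof.
by rewrite /frob2 [RHS]mxE; apply: eq_bigr => i _; rewrite big_ord1 mxE expr2.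
Qed.

Lemma cV_dotC n (u v : 'cV[R]_n) : (u^T *m v) 0 0 = (v^T *m u) 0 0.
Proof. by rewrite -[u^T *m v]trmxK trmx_mul trmxK mxE. Qed.

Lemma qformZ n c (M : 'M[R]_n) x : qform (c *: M) x = c * qform M x.
Proof. by rewrite /qform -scalemxAr -scalemxAl mxE. Qed.

Lemma loewner_le_qform n (M N : 'M[R]_n) :
  loewner_le M N -> forall x, qform M x <= qform N x.
Proof.
by move=> MN x; rewrite -subr_ge0 /qform; move: (MN x); rewrite mulmxBr mulmxBl !mxE.
Qed.

Lemma qform_gram_ridge n m (B : 'M[R]_(n, m)) lambda v :
  qform (B *m B^T + lambda%:M) v = frob2 (B^T *m v) + lambda * frob2 v.
Proof.
rewrite /qform !frob2_cV trmx_mul trmxK mulmxDr mulmxDl !mulmxA.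
by rewrite mul_mx_scalar -scalemxAl !mxE.
Qed.

Lemma qform_pos_unitmx n (M : 'M[R]_n) :
  (forall v, v != 0 -> 0 < qform M v) -> M \in unitmx.
Proof.
move=> Mpos; rewrite -row_free_unit -kermx_eq0; apply/rowV0P => u /sub_kermxP uM0.
apply: trmx_inj; rewrite trmx0; apply/eqP; apply: contraT => /Mpos.
by rewrite /qform trmxK uM0 mul0mx mxE ltxx.
Qed.

Lemma ridge_gram_unitmx n m (B : 'M[R]_(n, m)) lambda :
  0 < lambda -> B *m B^T + lambda%:M \in unitmx.
Proof.
move=> lam_gt0; apply: qform_pos_unitmx => v v0.
rewrite qform_gram_ridge ltr_wpDl ?frob2_ge0 // mulr_gt0 //.
by rewrite lt_def frob2_eq0 v0 frob2_ge0.
Qed.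

Lemma pinv_unitmx n (M P : 'M[R]_n) : M \in unitmx -> is_pinv M P -> P = invmx M.
Proof.
move=> Munit [MPM _ _ _].
have := congr1 (fun X => invmx M *m X *m invmx M) MPM.
by rewrite /= [invmx M *m (_ *m M)]mulmxA !mulmxK // mulmxA mulVmx // mul1mx.
Qed.

(* Fenchel-Young for quadratic forms: expand [0 <= qform M (x - t M^-1 a)]. *)
Lemma qform_young n (M : 'M[R]_n) (x a : 'cV[R]_n) t :
  M^T = M -> M \in unitmx -> (forall v, 0 <= qform M v) ->
  t *+ 2 * (x^T *m a) 0 0 - qform M x <= t ^+ 2 * qform (invmx M) a.
Proof.
move=> Msym Munit Mpsd; set y := invmx M *m a.
have yTM : y^T *m M = a^T by rewrite trmx_mul trmx_inv Msym mulmxKV.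
have My : M *m y = a by rewrite mulKVmx.
have uT : (x - t *: y)^T = x^T - t *: y^T by rewrite linearB linearZ.
have := Mpsd (x - t *: y); rewrite /qform uT !(mulmxBl, mulmxBr) -!(scalemxAl, scalemxAr).
rewrite -(mulmxA x^T M y) My yTM /y mulmxA.
do 2 rewrite ![@fun_of_matrix _ _ _ (_ + _) _ _]mxE ![@fun_of_matrix _ _ _ (- _) _ _]mxE
  ![@fun_of_matrix _ _ _ (_ *: _) _ _]mxE.
by rewrite (cV_dotC a x) mulr2n expr2; lra.
Qed.

End QuadraticForms.

Section OrthogonalResidual.
Variables (R : realFieldType) (n r : nat) (Z : 'M[R]_(n, r)).
Hypothesis ZTZ : Z^T *m Z = 1%:M.

Lemma trmx_mul_resid (a : 'cV[R]_n) : Z^T *m (a - Z *m Z^T *m a) = 0.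
Proof. by rewrite mulmxBr !mulmxA ZTZ mul1mx subrr. Qed.

Lemma frob2_resid (a : 'cV[R]_n) :
  frob2 (a - Z *m Z^T *m a) = ((a - Z *m Z^T *m a)^T *m a) 0 0.
Proof.
set x := a - _; have xTZ : x^T *m Z = 0.
  by rewrite -[Z]trmxK -trmx_mul trmx_mul_resid trmx0.
by rewrite frob2_cV {2}/x mulmxBr -!mulmxA (mulmxA x^T) xTZ mul0mx subr0.
Qed.

End OrthogonalResidual.

Theorem mainTheorem5 (R : realFieldType) (n d d' k r : nat)
    (A Ak : 'M[R]_(n, d)) (C1 : 'M[R]_(n, d')) (c1 : R)
    (Z : 'M[R]_(n, r)) (P : 'M[R]_n) :
  (0 < k)%N ->
  best_rank_approx k A Ak ->
  let lambda := frob2 (A - Ak) / k%:R in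
  0 < lambda ->
  0 < c1 ->
  loewner_le (A *m A^T + lambda%:M) (c1 *: (C1 *m C1^T + lambda%:M)) ->
  Z^T *m Z = 1%:M ->
  (Z^T == C1^T)%MS ->
  is_pinv (A *m A^T + lambda%:M) P ->
  forall i : 'I_d,
    frob2 (col i A - Z *m Z^T *m col i A) <= c1 * lambda * ridge_score A P i.
Proof.
move=> _ _ lambda lam_gt0 c1_gt0 AC_le ZTZ /andP[_ /submxP[W C1Z]] Pinv i.
set M := A *m A^T + lambda%:M; set a := col i A; set x := a - Z *m Z^T *m a.
set t := c1 * lambda; have t_gt0 : 0 < t by rewrite mulr_gt0.
have Munit : M \in unitmx by apply: ridge_gram_unitmx.
have Msym : M^T = M by rewrite linearD /= trmx_mul trmxK tr_scalar_mx.
have Mpsd v : 0 <= qform M v.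
  by rewrite /M qform_gram_ridge; apply: addr_ge0 (mulr_ge0 (ltW lam_gt0) _);
    apply: frob2_ge0.
have C1x : C1^T *m x = 0 by rewrite C1Z -mulmxA (trmx_mul_resid ZTZ) mulmx0.
have Mx : qform M x <= t * frob2 x.
  apply: le_trans (loewner_le_qform AC_le x) _.
  by rewrite qformZ qform_gram_ridge C1x frob2_0 add0r mulrA.
have := qform_young x a t Msym Munit Mpsd.
rewrite /ridge_score (pinv_unitmx Munit Pinv) -/a -/(qform _ a).
rewrite -(frob2_resid ZTZ) -/x => young; rewrite -(ler_pM2l t_gt0) mulrA -expr2; lra.
Qed.
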